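(* Let $\lambda_1>\lambda_2$ be nonzero real numbers, let $C_1,C_2\in\mathbb{R}$, and set $$q(t)=\frac{C_1}{\lambda_1}\big(e^{\lambda_1 t}-1\big)+\frac{C_2}{\lambda_2}\big(e^{\lambda_2 t}-1\big)+1 .$$ Write $\Theta=C_1\left(-\tfrac{C_2}{C_1}\right)^{\frac{\lambda_1}{\lambda_1-\lambda_2}}\left(\tfrac1{\lambda_1}-\tfrac1{\lambda_2}\right)+1-\tfrac{C_1}{\lambda_1}-\tfrac{C_2}{\lambda_2}$ (defined when $C_1>0>C_2$). Then $q$ vanishes at some $t>0$ if and only if one of the following holds: 1. $\lambda_1>0$ and: (a) $C_1<0$; or (b) $C_1>0$, $C_2<0$, $C_1+C_2<0$, $\Theta\le 0$; or (c) $C_1=0$, $C_2<0$, $\lambda_2>0$; or (d) $C_1=0$, $C_2<\lambda_2$, $\lambda_2<0$. 2. $\lambda_1<0$ and: (a) $C_1>0$, $C_2<0$, $C_1+C_2<0$, $\Theta\le0$; or (b) $C_1<0$, $\tfrac{C_1}{\lambda_1}+\tfrac{C_2}{\lambda_2}>1$; or (c) $C_1=0$, $C_2<0$, $\lambda_2>0$; or (d) $C_1=0$, $C_2<\lambda_2$, $\lambda_2<0$.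
   Context: Consider the extended system $\dot{\mathbf v}=-v_1\mathbf v+Q\mathbf v$, $\mathbf v=(v_1,v_2)$, for a constant real $2\times2$ matrix $Q$; its solution blows up in finite positive time iff the decisive function $q$ (with $q(0)=1$, $\dot q=u_1$, $\dot{\mathbf u}=Q\mathbf u$, $\mathbf u(0)=\mathbf v(0)$, $\mathbf v=\mathbf u/q$) vanishes at some $t>0$. If $AQA^{-1}=\mathrm{diag}(\lambda_1,\lambda_2)$ with $A=(a_{ij})$ nonsingular, then $q$ has exactly the form above with $C_1=\frac{a_{22}}{\det A}(a_{11}v_1(0)+a_{12}v_2(0))$, $C_2=-\frac{a_{12}}{\det A}(a_{21}v_1(0)+a_{22}v_2(0))$; so the claim characterizes finite-time blow-up of the extended system in this case. *)

From Stdlib Require Import Reals.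
Open Scope R_scope.

Definition q (l1 l2 C1 C2 t : R) : R :=
  C1 / l1 * (exp (l1 * t) - 1) + C2 / l2 * (exp (l2 * t) - 1) + 1.

(* Theta; only meaningful (and only used) when C1 > 0 > C2, so that the
   base -C2/C1 is positive and Rpower is the usual real power. *)
Definition Theta (l1 l2 C1 C2 : R) : R :=
  C1 * Rpower (- C2 / C1) (l1 / (l1 - l2)) * (1 / l1 - 1 / l2)
  + 1 - C1 / l1 - C2 / l2.

From Stdlib Require Import Reals Lra.
From Coquelicot Require Import Coquelicot.
Open Scope R_scope.

(* Since [q 0 = 1], [q] has a positive root iff it takes a nonpositive value
   on [(0, +oo)].  Its derivative is [e^(l2 t) (C1 e^((l1 - l2) t) + C2)], whose
   second factor is monotone with the sign of [C1].  If [C1 >= 0] and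
   [C1 + C2 >= 0], then [q' >= 0] and [q >= 1]; if [C1 > 0 > C1 + C2], then [q]
   attains its global minimum [Theta] at the positive zero [tstar] of [q'].
   Otherwise [q] has a limit at [+oo]: [-oo] when a positive rate carries a
   negative coefficient, and [1 - C1/l1 - C2/l2] when the rates that occur are
   negative; in the latter case the decomposition [q_split] shows that [q > 0]
   as soon as this limit is nonnegative. *)

Lemma nondecreasing_of_derive_nonneg (f f' : R -> R) (a b : R) :
  a <= b -> (forall c, derivable_pt_lim f c (f' c)) ->
  (forall c, a < c < b -> 0 <= f' c) -> f a <= f b.
Proof.
  intros Hab Hf Hf'. destruct (Rle_lt_or_eq_dec _ _ Hab) as [Hlt|<-]; [|lra].
  destruct (MVT_cor2 f f' a b Hlt (fun c _ => Hf c)) as [c [Hfab Hc]].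
  specialize (Hf' c Hc). nra.
Qed.

Lemma min_of_derive_sign (f f' : R -> R) (s t : R) :
  (forall c, derivable_pt_lim f c (f' c)) ->
  (forall c, 0 <= f' c * (c - s)) -> f s <= f t.
Proof.
  intros Hf Hf'. destruct (Rtotal_order t s) as [Hts|[<-|Hst]].
  - destruct (MVT_cor2 f f' t s Hts (fun c _ => Hf c)) as [c [Hfts Hc]].
    specialize (Hf' c). nra.
  - lra.
  - destruct (MVT_cor2 f f' s t Hst (fun c _ => Hf c)) as [c [Hfst Hc]].
    specialize (Hf' c). nra.
Qed.

Lemma is_lim_exp_scal (l : R) (L : Rbar) :
  l <> 0 -> is_lim exp (Rbar_mult l p_infty) L ->
  is_lim (fun t => exp (l * t)) p_infty L.
Proof.
  intros Hl HL. apply (is_lim_ext (fun t => exp (l * t + 0))).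
  - intros t. now rewrite Rplus_0_r.
  - apply is_lim_comp_lin; [|exact Hl]. now rewrite Rbar_plus_0_r.
Qed.

Lemma is_lim_exp_scal_pos (l : R) :
  0 < l -> is_lim (fun t => exp (l * t)) p_infty p_infty.
Proof.
  intros Hl. apply is_lim_exp_scal; [lra|]. simpl.
  destruct (Rle_dec 0 l) as [Hl'|]; [|exfalso; lra].
  destruct (Rle_lt_or_eq_dec 0 l Hl'); [exact is_lim_exp_p|exfalso; lra].
Qed.

Lemma is_lim_exp_scal_neg (l : R) :
  l < 0 -> is_lim (fun t => exp (l * t)) p_infty 0.
Proof.
  intros Hl. apply is_lim_exp_scal; [lra|]. simpl.
  destruct (Rle_dec 0 l); [exfalso; lra|exact is_lim_exp_m].
Qed.

Lemma exists_neg_of_is_lim_neg (f : R -> R) (l : Rbar) :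
  is_lim f p_infty l -> Rbar_lt l 0 -> exists t, 0 < t /\ f t < 0.
Proof.
  intros Hf Hl. apply is_lim_spec in Hf.
  assert (Hev : exists M, forall t, M < t -> f t < 0).
  { destruct l as [l| |]; simpl in Hl, Hf; try contradiction.
    - assert (Heps : 0 < - l / 2) by lra.
      destruct (Hf (mkposreal _ Heps)) as [M HM]. exists M. intros t Ht.
      specialize (HM t Ht). apply Rabs_lt_between in HM. simpl in HM. lra.
    - exact (Hf 0). }
  destruct Hev as [M HM]. exists (Rmax M 0 + 1).
  pose proof (Rmax_l M 0). pose proof (Rmax_r M 0).
  split; [|apply HM]; lra.
Qed.

Lemma exp_sub_mul_sub_nonneg (x y : R) : 0 <= (exp x - exp y) * (x - y).
Proof.
  destruct (Rtotal_order x y) as [Hxy|[<-|Hxy]].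
  - pose proof (exp_increasing _ _ Hxy). nra.
  - lra.
  - pose proof (exp_increasing _ _ Hxy). nra.
Qed.

Lemma is_lim_exp_mul_m_infty (L mu c : R) (g : R -> R) :
  0 < mu -> c < 0 -> is_lim g p_infty c ->
  is_lim (fun t => L + exp (mu * t) * g t) p_infty m_infty.
Proof.
  intros Hmu Hc Hg.
  assert (Hprod : is_lim (fun t => exp (mu * t) * g t) p_infty m_infty).
  { replace m_infty with (Rbar_mult p_infty c).
    - apply is_lim_mult; [exact (is_lim_exp_scal_pos _ Hmu)|exact Hg|simpl; lra].
    - simpl. destruct (Rle_dec 0 c); [exfalso; lra|reflexivity]. }
  exact (is_lim_plus _ _ _ _ _ _ (is_lim_const L _) Hprod eq_refl).
Qed.

Lemma Rdiv_le_1_neg_iff (C l : R) : l < 0 -> (C / l <= 1 <-> l <= C).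
Proof.
  intros Hl. assert (HC : C = C / l * l) by (field; lra).
  split; intros H; [rewrite HC|]; nra.
Qed.

Lemma exp_scal_sub (l1 l2 t : R) : exp (l1 * t) = exp (l2 * t) * exp ((l1 - l2) * t).
Proof. rewrite <- exp_plus. f_equal. ring. Qed.

Definition dq (l1 l2 C1 C2 t : R) : R := C1 * exp (l1 * t) + C2 * exp (l2 * t).

Definition q_at_infty (l1 l2 C1 C2 : R) : R := 1 - C1 / l1 - C2 / l2.

(* The unique critical point of [q] when [C1 > 0 > C2]. *)
Definition tstar (l1 l2 C1 C2 : R) : R := ln (- C2 / C1) / (l1 - l2).

Section DecisiveFunction.

Variables l1 l2 C1 C2 : R.
Hypotheses (Hlt : l2 < l1) (Hl1 : l1 <> 0) (Hl2 : l2 <> 0).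

Local Notation Q := (q l1 l2 C1 C2).
Local Notation dQ := (dq l1 l2 C1 C2).

Lemma q_0 : Q 0 = 1.
Proof. unfold q. rewrite !Rmult_0_r, exp_0. ring. Qed.

Lemma is_derive_q (t : R) : derivable_pt_lim Q t (dQ t).
Proof. apply is_derive_Reals. unfold q, dq. auto_derive; [easy|field; auto]. Qed.

Lemma q_has_root_of_nonpos (t : R) :
  0 < t -> Q t <= 0 -> exists u, u > 0 /\ Q u = 0.
Proof.
  intros Ht Hqt.
  assert (Hcont : continuity Q).
  { intros u. apply derivable_continuous_pt. exists (dQ u). apply is_derive_q. }
  destruct (IVT_cor Q 0 t Hcont) as [u [[Hu0 Hut] Hqu]]; [lra|rewrite q_0; lra|].
  exists u. split; [|exact Hqu].
  destruct (Rle_lt_or_eq_dec _ _ Hu0) as [|<-]; [easy|rewrite q_0 in Hqu; lra].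
Qed.

Lemma dq_factor (t : R) :
  dQ t = exp (l2 * t) * (C1 * exp ((l1 - l2) * t) + C2).
Proof. unfold dq. rewrite (exp_scal_sub l1 l2). ring. Qed.

Lemma q_ge_1_of_dq_nonneg (t : R) :
  0 < t -> (forall c, 0 < c < t -> 0 <= dQ c) -> 1 <= Q t.
Proof.
  intros Ht HdQ. rewrite <- q_0.
  apply (nondecreasing_of_derive_nonneg _ dQ); [lra|exact is_derive_q|exact HdQ].
Qed.

Lemma q_ge_1 (t : R) : 0 <= C1 -> 0 <= C1 + C2 -> 0 < t -> 1 <= Q t.
Proof.
  intros HC1 HC12 Ht. apply q_ge_1_of_dq_nonneg; [exact Ht|].
  intros c Hc. rewrite dq_factor.
  pose proof (exp_pos (l2 * c)). pose proof (exp_ineq1_le ((l1 - l2) * c)).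
  assert (0 <= (l1 - l2) * c) by nra.
  apply Rmult_le_pos; nra.
Qed.

Section Minimum.

Hypotheses (HC1 : 0 < C1) (HC2 : C2 < 0).

Lemma exp_tstar : exp ((l1 - l2) * tstar l1 l2 C1 C2) = - C2 / C1.
Proof.
  unfold tstar. replace ((l1 - l2) * (ln (- C2 / C1) / (l1 - l2))) with (ln (- C2 / C1))
    by (field; lra).
  apply exp_ln. apply Rdiv_lt_0_compat; lra.
Qed.

Lemma q_tstar : Q (tstar l1 l2 C1 C2) = Theta l1 l2 C1 C2.
Proof.
  assert (HP : Rpower (- C2 / C1) (l1 / (l1 - l2)) = exp (l1 * tstar l1 l2 C1 C2)).
  { unfold Rpower, tstar. f_equal. field. lra. }
  unfold q, Theta. rewrite HP, (exp_scal_sub l1 l2), exp_tstar.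
  field. lra.
Qed.

Lemma Theta_le_q (t : R) : Theta l1 l2 C1 C2 <= Q t.
Proof.
  rewrite <- q_tstar. apply (min_of_derive_sign _ dQ); [exact is_derive_q|].
  intros c. rewrite dq_factor.
  set (ts := tstar l1 l2 C1 C2).
  assert (Hroot : C1 * exp ((l1 - l2) * c) + C2
                  = C1 * (exp ((l1 - l2) * c) - exp ((l1 - l2) * ts))).
  { unfold ts. rewrite exp_tstar. field. lra. }
  assert (Hsign : 0 <= (exp ((l1 - l2) * c) - exp ((l1 - l2) * ts)) * (c - ts)).
  { pose proof (exp_sub_mul_sub_nonneg ((l1 - l2) * c) ((l1 - l2) * ts)). nra. }
  pose proof (exp_pos (l2 * c)).
  rewrite Hroot, Rmult_assoc, Rmult_assoc. apply Rmult_le_pos; [lra|].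
  apply Rmult_le_pos; [lra|]. exact Hsign.
Qed.

Lemma tstar_pos : C1 + C2 < 0 -> 0 < tstar l1 l2 C1 C2.
Proof.
  intros HC12. unfold tstar. apply Rdiv_lt_0_compat; [|lra].
  rewrite <- ln_1. apply ln_increasing; [lra|].
  apply (Rmult_lt_reg_r C1); [lra|]. field_simplify; lra.
Qed.

End Minimum.

Lemma q_split (t : R) :
  Q t = q_at_infty l1 l2 C1 C2 + exp (l2 * t) * (C1 / l1 * exp ((l1 - l2) * t) + C2 / l2).
Proof. unfold q, q_at_infty. rewrite (exp_scal_sub l1 l2). ring. Qed.

Lemma q_at_infty_lt_q (t : R) :
  0 < C1 / l1 * exp ((l1 - l2) * t) + C2 / l2 -> q_at_infty l1 l2 C1 C2 < Q t.
Proof.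
  intros Hpos. rewrite q_split. pose proof (exp_pos (l2 * t)).
  assert (0 < exp (l2 * t) * (C1 / l1 * exp ((l1 - l2) * t) + C2 / l2))
    by (apply Rmult_lt_0_compat; lra).
  lra.
Qed.

Lemma q_pos_decay (t : R) :
  l1 < 0 -> C1 < 0 -> 0 <= q_at_infty l1 l2 C1 C2 -> 0 < t -> 0 < Q t.
Proof.
  intros Hneg HC1 Hinf Ht.
  set (a := C1 / l1). set (b := C2 / l2).
  assert (Ha : 0 < a) by (apply Rdiv_neg_neg; lra).
  destruct (Rlt_or_le 0 (a * exp ((l1 - l2) * t) + b)) as [Hpos|Hnonpos].
  - pose proof (q_at_infty_lt_q t Hpos). lra.
  - apply Rlt_le_trans with 1; [lra|]. apply q_ge_1_of_dq_nonneg; [exact Ht|].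
    (* [a e^((l1 - l2) c) + b] increases in [c], so it is negative on [(0, t)];
       this forces [b < 0] and makes [q'] positive there. *)
    intros c Hc.
    assert (Hmono : exp ((l1 - l2) * c) < exp ((l1 - l2) * t))
      by (apply exp_increasing; nra).
    assert (Hhc : a * exp ((l1 - l2) * c) + b < 0) by nra.
    assert (Hb : b < 0) by (pose proof (exp_pos ((l1 - l2) * c)); nra).
    assert (HdQ : dQ c = exp (l2 * c)
                          * (l1 * (a * exp ((l1 - l2) * c) + b) - (l1 - l2) * b)).
    { rewrite dq_factor. unfold a, b. field. auto. }
    rewrite HdQ. pose proof (exp_pos (l2 * c)).
    apply Rmult_le_pos; nra.
Qed.

Lemma is_lim_q_decay :
  l1 < 0 -> l2 < 0 -> is_lim Q p_infty (q_at_infty l1 l2 C1 C2).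
Proof.
  intros Hneg1 Hneg2.
  apply (is_lim_ext (fun t => q_at_infty l1 l2 C1 C2 + C1 / l1 * exp (l1 * t)
                              + C2 / l2 * exp (l2 * t))).
  { intros t. unfold q, q_at_infty. ring. }
  pose proof (is_lim_scal_l _ (C1 / l1) _ _ (is_lim_exp_scal_neg _ Hneg1)) as H1.
  pose proof (is_lim_scal_l _ (C2 / l2) _ _ (is_lim_exp_scal_neg _ Hneg2)) as H2.
  rewrite Rbar_mult_0_r in H1, H2.
  replace (Finite (q_at_infty l1 l2 C1 C2))
    with (Finite (q_at_infty l1 l2 C1 C2 + 0 + 0)) by (f_equal; ring).
  apply is_lim_plus'; [apply is_lim_plus'; [apply is_lim_const|]|]; assumption.
Qed.

Lemma is_lim_q_growth : 0 < l1 -> C1 < 0 -> is_lim Q p_infty m_infty.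
Proof.
  intros Hpos HC1.
  apply (is_lim_ext (fun t => q_at_infty l1 l2 C1 C2
                              + exp (l1 * t) * (C1 / l1 + C2 / l2 * exp ((l2 - l1) * t)))).
  { intros t. unfold q, q_at_infty. rewrite (exp_scal_sub l2 l1). ring. }
  apply (is_lim_exp_mul_m_infty _ _ (C1 / l1 + 0)); [exact Hpos| |].
  - rewrite Rplus_0_r. apply Rdiv_neg_pos; lra.
  - apply is_lim_plus'; [apply is_lim_const|].
    pose proof (is_lim_scal_l _ (C2 / l2) _ _ (is_lim_exp_scal_neg (l2 - l1) ltac:(lra)))
      as Hlim.
    now rewrite Rbar_mult_0_r in Hlim.
Qed.

Lemma q_C1_0 (t : R) : C1 = 0 -> Q t = q_at_infty l1 l2 C1 C2 + exp (l2 * t) * (C2 / l2).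
Proof. intros HC1. rewrite q_split, HC1. unfold Rdiv. ring. Qed.

Lemma q_pos_C1_0 (t : R) : C1 = 0 -> l2 < 0 -> l2 <= C2 -> C2 < 0 -> 0 < Q t.
Proof.
  intros HC1 Hneg Hl2C2 HC2.
  assert (Hb : 0 < C2 / l2) by (apply Rdiv_neg_neg; lra).
  assert (Hinf : 0 <= q_at_infty l1 l2 C1 C2).
  { apply (Rdiv_le_1_neg_iff C2 l2 Hneg) in Hl2C2. unfold q_at_infty. rewrite HC1.
    unfold Rdiv at 1. rewrite Rmult_0_l. lra. }
  assert (Hlt_q : q_at_infty l1 l2 C1 C2 < Q t).
  { apply q_at_infty_lt_q. rewrite HC1. unfold Rdiv at 1.
    rewrite Rmult_0_l, Rmult_0_l. lra. }
  lra.
Qed.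

Lemma is_lim_q_C1_0_growth : C1 = 0 -> 0 < l2 -> C2 < 0 -> is_lim Q p_infty m_infty.
Proof.
  intros HC1 Hpos HC2.
  apply (is_lim_ext (fun t => q_at_infty l1 l2 C1 C2 + exp (l2 * t) * (C2 / l2))).
  { intros t. now rewrite q_C1_0. }
  apply (is_lim_exp_mul_m_infty _ _ (C2 / l2)); [exact Hpos| |apply is_lim_const].
  apply Rdiv_neg_pos; lra.
Qed.

Lemma is_lim_q_C1_0_decay : C1 = 0 -> l2 < 0 -> is_lim Q p_infty (q_at_infty l1 l2 C1 C2).
Proof.
  intros HC1 Hneg.
  apply (is_lim_ext (fun t => q_at_infty l1 l2 C1 C2 + exp (l2 * t) * (C2 / l2))).
  { intros t. now rewrite q_C1_0. }
  replace (Finite (q_at_infty l1 l2 C1 C2))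
    with (Finite (q_at_infty l1 l2 C1 C2 + 0 * (C2 / l2))) by (f_equal; ring).
  apply is_lim_plus'; [apply is_lim_const|].
  apply (is_lim_scal_r _ (C2 / l2) _ _ (is_lim_exp_scal_neg _ Hneg)).
Qed.

Lemma q_has_root_of_is_lim_neg (l : Rbar) :
  is_lim Q p_infty l -> Rbar_lt l 0 -> exists t, t > 0 /\ Q t = 0.
Proof.
  intros Hlim Hl. destruct (exists_neg_of_is_lim_neg Q l Hlim Hl) as [t [Ht Hqt]].
  apply (q_has_root_of_nonpos t); lra.
Qed.

Lemma q_root_iff_C1_pos :
  0 < C1 -> (exists t, t > 0 /\ Q t = 0) <->
  C2 < 0 /\ C1 + C2 < 0 /\ Theta l1 l2 C1 C2 <= 0.
Proof.
  intros HC1. split.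
  - intros [t [Ht Hroot]].
    destruct (Rlt_or_le (C1 + C2) 0) as [HC12|HC12].
    + pose proof (Theta_le_q HC1 ltac:(lra) t). lra.
    + pose proof (q_ge_1 t ltac:(lra) HC12 Ht). lra.
  - intros (HC2 & HC12 & HTheta).
    apply (q_has_root_of_nonpos (tstar l1 l2 C1 C2)).
    + exact (tstar_pos HC1 HC12).
    + rewrite (q_tstar HC1 HC2). exact HTheta.
Qed.

Lemma q_root_iff_C1_0 :
  C1 = 0 -> (exists t, t > 0 /\ Q t = 0) <->
  (C2 < 0 /\ 0 < l2) \/ (C2 < l2 /\ l2 < 0).
Proof.
  intros HC1. split.
  - intros [t [Ht Hroot]].
    destruct (Rlt_or_le C2 0) as [HC2|HC2].
    2: { pose proof (q_ge_1 t ltac:(lra) ltac:(lra) Ht). lra. }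
    destruct (Rlt_or_le 0 l2) as [Hpos|Hneg]; [left; lra|right].
    destruct (Rlt_or_le C2 l2) as [HC2l2|HC2l2]; [lra|].
    pose proof (q_pos_C1_0 t HC1 ltac:(lra) HC2l2 HC2). lra.
  - intros [[HC2 Hpos]|[HC2 Hneg]].
    + exact (q_has_root_of_is_lim_neg _ (is_lim_q_C1_0_growth HC1 Hpos HC2) I).
    + apply (q_has_root_of_is_lim_neg _ (is_lim_q_C1_0_decay HC1 Hneg)).
      simpl. unfold q_at_infty. rewrite HC1. unfold Rdiv at 1. rewrite Rmult_0_l.
      destruct (Rle_or_lt (C2 / l2) 1) as [Hle|]; [|lra].
      apply (Rdiv_le_1_neg_iff C2 l2 Hneg) in Hle. lra.
Qed.

Lemma q_root_iff_C1_neg :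
  C1 < 0 -> (exists t, t > 0 /\ Q t = 0) <-> 0 < l1 \/ C1 / l1 + C2 / l2 > 1.
Proof.
  intros HC1. split.
  - intros [t [Ht Hroot]].
    destruct (Rlt_or_le 0 l1) as [Hpos|Hneg]; [now left|right].
    destruct (Rlt_or_le 1 (C1 / l1 + C2 / l2)) as [|Hle]; [lra|].
    pose proof (q_pos_decay t ltac:(lra) HC1 ltac:(unfold q_at_infty; lra) Ht). lra.
  - intros Hcase. destruct (Rlt_or_le 0 l1) as [Hpos|Hneg].
    + exact (q_has_root_of_is_lim_neg _ (is_lim_q_growth Hpos HC1) I).
    + apply (q_has_root_of_is_lim_neg _ (is_lim_q_decay ltac:(lra) ltac:(lra))).
      simpl. unfold q_at_infty. lra.
Qed.

End DecisiveFunction.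

Theorem mainTheorem2 (l1 l2 C1 C2 : R) :
  l1 > l2 -> l1 <> 0 -> l2 <> 0 ->
  ((exists t : R, t > 0 /\ q l1 l2 C1 C2 t = 0) <->
   ((l1 > 0 /\
      (C1 < 0 \/
       (C1 > 0 /\ C2 < 0 /\ C1 + C2 < 0 /\ Theta l1 l2 C1 C2 <= 0) \/
       (C1 = 0 /\ C2 < 0 /\ l2 > 0) \/
       (C1 = 0 /\ C2 < l2 /\ l2 < 0))) \/
    (l1 < 0 /\
      ((C1 > 0 /\ C2 < 0 /\ C1 + C2 < 0 /\ Theta l1 l2 C1 C2 <= 0) \/
       (C1 < 0 /\ C1 / l1 + C2 / l2 > 1) \/
       (C1 = 0 /\ C2 < 0 /\ l2 > 0) \/
       (C1 = 0 /\ C2 < l2 /\ l2 < 0))))).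
Proof.
  intros Hlt Hl1 Hl2.
  assert (Hsign : 0 < l1 \/ l1 < 0) by lra.
  destruct (Rtotal_order C1 0) as [HC1|[HC1|HC1]].
  - rewrite (q_root_iff_C1_neg _ _ _ _ Hlt Hl1 Hl2 HC1). intuition lra.
  - rewrite (q_root_iff_C1_0 _ _ _ _ Hlt Hl1 Hl2 HC1). intuition lra.
  - rewrite (q_root_iff_C1_pos _ _ _ _ Hlt Hl1 Hl2 HC1). intuition lra.
Qed.
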